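(* Let $L=(L^{(n)})_n$ be a family where each $L^{(n)}$ is a set of labels on $n$ qubits, with the two properties: (1) for all $\ell_1,\ell_2\in L^{(n)}$ we have $\ell_1\ell_2\notin L^{(n)}$; (2) $\lim_{n\to\infty}|L^{(n)}|/n=\infty$. Let $C=(C^{(n)})_n$ be a family of CNOT circuits for the nearest-neighbor connectivity graph such that $C^{(n)}$ generates $L^{(n)}$. Then $\mu(C,L)\geq 1+\gamma$ for some absolute constant $\gamma>0$ (independent of the families $L$ and $C$).
   Context: Qubits are indexed $1,\ldots,n$. $\mathrm{CX}_{i,j}$ ($i\neq j$) denotes the CNOT gate with control $i$ and target $j$. A CNOT circuit is a finite sequence of moments, each a set of CNOT gates acting on pairwise disjoint qubits; $\operatorname{size}(C)$ is its total number of gates. It is for the nearest-neighbor connectivity graph if every gate $\mathrm{CX}_{i,j}$ in it has $|i-j|=1$. A label is a subset of $\{1,\ldots,n\}$; for labels $a,b$, $ab$ denotes their symmetric difference. A label sequence $\ell=(\ell_1,\ldots,\ell_n)$ is acted on from the right: $\ell\,\mathrm{CX}_{i,j}$ replaces $\ell_j$ by $\ell_i\ell_j$; a moment applies its gates and a circuit applies its moments in order. With $C_{1,m}$ the first $m$ moments of $C$, $C$ generates a label set $L$ if every element of $L$ occurs as an entry of $\ell^0 C_{1,m}$ for some $m\geq 1$, where (by the paper's standing convention) the initial sequence is $\ell^0=(\{1\},\ldots,\{n\})$. $\mu(C,L)=\liminf_{n\to\infty}\operatorname{size}(C^{(n)})/|L^{(n)}|$. *)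

From HB Require Import structures.
From mathcomp Require Import all_boot all_order all_algebra.
From mathcomp Require Import all_classical all_reals all_analysis.
From mathcomp Require Import Rstruct.

Set Implicit Arguments.
Unset Strict Implicit.
Unset Printing Implicit Defensive.

(* Qubits are 'I_n (0-based, i.e. qubit k+1 of the paper is ordinal k). *)
Definition label (n : nat) := {set 'I_n}.

Definition symdiff (n : nat) (a b : label n) : label n := (a :\: b) :|: (b :\: a).

Definition labseq (n : nat) := {ffun 'I_n -> label n}.

(* a CNOT gate CX_{i,j} is the pair (control i, target j) *)
Definition gate (n : nat) := ('I_n * 'I_n)%type.
Definition moment (n : nat) := seq (gate n).
Definition circuit (n : nat) := seq (moment n).

Definition gate_qubits (n : nat) (g : gate n) : {set 'I_n} := [set g.1; g.2].
Definition moment_ok (n : nat) (M : moment n) : bool :=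
  all (fun g : gate n => g.1 != g.2) M &&
  pairwise (fun g h : gate n => [disjoint gate_qubits g & gate_qubits h]) M.

Definition nn_gate (n : nat) (g : gate n) : bool :=
  ((g.1 : nat).+1 == g.2) || ((g.2 : nat).+1 == g.1).

Definition nn_circuit (n : nat) (C : circuit n) : bool :=
  all (fun M => moment_ok M && all (@nn_gate n) M) C.

Definition csize (n : nat) (C : circuit n) : nat := sumn (map size C).

Definition apply_gate (n : nat) (l : labseq n) (g : gate n) : labseq n :=
  [ffun k => if k == g.2 then symdiff (l g.1) (l g.2) else l k].
Definition apply_moment (n : nat) (l : labseq n) (M : moment n) : labseq n :=
  foldl (@apply_gate n) l M.
Definition apply_circuit (n : nat) (l : labseq n) (C : circuit n) : labseq n :=
  foldl (@apply_moment n) l C.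

Definition init_labseq (n : nat) : labseq n := [ffun i => [set i]].

Definition generates (n : nat) (C : circuit n) (L : {set label n}) : Prop :=
  forall x, x \in L ->
    exists m : nat, (1 <= m)%N /\ (m <= size C)%N /\
      exists k : 'I_n, apply_circuit (init_labseq n) (take m C) k = x.

Definition symdiff_free (n : nat) (L : {set label n}) : Prop :=
  forall l1 l2, l1 \in L -> l2 \in L -> symdiff l1 l2 \notin L.

Definition superlinear (L : forall n : nat, {set label n}) : Prop :=
  forall M : nat, exists N : nat, forall n : nat, (N <= n)%N -> (M * n <= #|L n|)%N.

Definition mu (C : forall n : nat, circuit n) (L : forall n : nat, {set label n})
  : \bar Rdefinitions.R :=
  limn_einf (fun n : nat =>
    (((csize (C n))%:R / (#|L n|)%:R : Rdefinitions.R)%R)%:E).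

From HB Require Import structures.
From mathcomp Require Import all_boot all_order all_algebra.
From mathcomp Require Import all_classical all_reals all_analysis.
From mathcomp Require Import Rstruct.
From mathcomp Require Import zify lra.
(* Re-imported so that the finite-set lemmas shadow their classical_sets homonyms. *)
From mathcomp Require Import fintype finset.
Import Order.TTheory GRing.Theory Num.Theory.

Set Implicit Arguments.
Unset Strict Implicit.
Unset Printing Implicit Defensive.

(* Give each qubit whose label lies in L the number of not yet seen labels it
   could reach by CNOTs controlled by its neighbours whose labels lie outside L
   (at most 4 labels, as it has at most two neighbours), and every other qubit
   the potential 13.  A nearest-neighbour gate raises the total potential by at
   most 13 at its target and 4 at each neighbour of the target.  When it
   produces a new label of L, the potential even decreases: either the target
   drops from 13 to at most 4, or the target's old label lies in L, so by
   symdiff-freeness the control's label does not, and the new label was one of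
   the target's reachable unseen labels, while no other potential grows.
   Charging 22 per new label of L, every gate costs at most 21, whence
   22 |L| <= 21 size(C) + 35 n, and |L| >= 67 n yields size(C) >= (1 + 1/44) |L|. *)

Section Symdiff.
Variable n : nat.
Implicit Types a b c : label n.

Lemma in_symdiff a b x : (x \in symdiff a b) = (x \in a) (+) (x \in b).
Proof. by rewrite !inE; case: (x \in a); case: (x \in b). Qed.

Lemma symdiffC : commutative (@symdiff n).
Proof. by move=> a b; apply/setP => x; rewrite !in_symdiff addbC. Qed.

Lemma symdiffA : associative (@symdiff n).
Proof. by move=> a b c; apply/setP => x; rewrite !in_symdiff addbA. Qed.

Lemma symdiff0s : left_id set0 (@symdiff n).
Proof. by move=> a; apply/setP => x; rewrite in_symdiff inE. Qed.

Lemma symdiffss a : symdiff a a = set0.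
Proof. by apply/setP => x; rewrite in_symdiff addbb inE. Qed.

End Symdiff.

HB.instance Definition _ n :=
  Monoid.isComLaw.Build (label n) set0 (@symdiff n)
    (@symdiffA n) (@symdiffC n) (@symdiff0s n).

Lemma big_symdiff n (A B : {set 'I_n}) (f : 'I_n -> label n) :
  \big[@symdiff n/set0]_(k in symdiff A B) f k =
  symdiff (\big[@symdiff n/set0]_(k in A) f k) (\big[@symdiff n/set0]_(k in B) f k).
Proof.
rewrite (big_setID (A := symdiff A B) A) (big_setID (A := A) B) (big_setID (A := B) A) (setIC B A).
have -> : symdiff A B :&: A = A :\: B.
  by apply/setP => x; rewrite !inE; case: (x \in A); case: (x \in B).
have -> : symdiff A B :\: A = B :\: A.
  by apply/setP => x; rewrite !inE; case: (x \in A); case: (x \in B).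
by rewrite Monoid.mulmACA /= symdiffss symdiff0s.
Qed.

Section Potential.
Variables (n : nat) (adj : rel 'I_n) (L : {set label n}).
Implicit Types (st : labseq n) (S : {set label n}) (j k : 'I_n) (g : gate n).
Implicit Types (p : labseq n * {set label n}) (s : seq (gate n)).

Definition nbrs j : {set 'I_n} := [set k | adj j k].

Hypothesis adjC : symmetric adj.
Hypothesis card_nbrs : forall j, #|nbrs j| <= 2.
Hypothesis Lfree : symdiff_free L.

Definition offL st k : label n := if st k \in L then set0 else st k.

Definition reach st j : {set label n} :=
  [set symdiff (st j) (\big[@symdiff n/set0]_(k in A) offL st k)
     | A : {set 'I_n} in powerset (nbrs j)].

Definition pot st S j : nat := if st j \in L then #|reach st j :\: S| else 13.

Definition total_pot st S : nat := \sum_j pot st S j.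

Lemma total_potD1 st S j : total_pot st S = pot st S j + \sum_(k | k != j) pot st S k.
Proof. exact: bigD1. Qed.

Lemma card_reach st j : #|reach st j| <= 4.
Proof.
apply: leq_trans (leq_imset_card _ _) _.
by rewrite card_powerset (@leq_pexp2l 2 _ 2).
Qed.

Lemma pot_le13 st S j : pot st S j <= 13.
Proof.
rewrite /pot; case: ifP => // _.
exact: leq_trans (subset_leq_card (subsetDl _ _)) (leq_trans (card_reach _ _) _).
Qed.

Lemma pot_inL st S j : st j \in L -> pot st S j <= 4.
Proof.
by rewrite /pot => ->; exact: leq_trans (subset_leq_card (subsetDl _ _)) (card_reach _ _).
Qed.

Lemma pot_subset st S S' j : S \subset S' -> pot st S' j <= pot st S j.
Proof. by move=> sSS'; rewrite /pot; case: ifP => // _; rewrite subset_leq_card ?setDS. Qed.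

Lemma reach_local {st1 st2 j} : st1 j = st2 j ->
  {in nbrs j, offL st1 =1 offL st2} -> reach st1 j = reach st2 j.
Proof.
move=> Ej Enbrs; apply: eq_in_imset => A; rewrite inE => /subsetP sAnbrs.
by rewrite Ej; congr symdiff; apply: eq_bigr => k /sAnbrs; exact: Enbrs.
Qed.

Lemma pot_local {st1 st2} S {j} : st1 j = st2 j ->
  {in nbrs j, offL st1 =1 offL st2} -> pot st1 S j = pot st2 S j.
Proof. by move=> Ej Enbrs; rewrite /pot (reach_local Ej Enbrs) Ej. Qed.

Definition out st g : label n := symdiff (st g.1) (st g.2).

Lemma apply_gateE st g k :
  apply_gate st g k = if k == g.2 then out st g else st k.
Proof. by rewrite ffunE. Qed.

Lemma pot_apply_gate_other st S g j : j != g.2 ->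
  pot (apply_gate st g) (out st g |: S) j <= pot st S j + 4 * (j \in nbrs g.2).
Proof.
move=> jt; have Ej : apply_gate st g j = st j by rewrite apply_gateE (negbTE jt).
have [_ | jNt] := boolP (j \in nbrs g.2); last first.
  rewrite muln0 addn0 (pot_local _ Ej) ?pot_subset ?subsetUr // => k kj.
  rewrite /offL apply_gateE; case: eqP => // Ekt.
  by move: kj jNt; rewrite Ekt !inE adjC => ->.
rewrite muln1; have [jL | jNL] := boolP (st j \in L).
  by apply: leq_trans (pot_inL _ _) (leq_addl _ _); rewrite Ej.
by rewrite /pot Ej (negbTE jNL) leq_addr.
Qed.

Lemma total_pot_apply_gate st S g :
  total_pot (apply_gate st g) (out st g |: S) + pot st S g.2 <=
  total_pot st S + pot (apply_gate st g) (out st g |: S) g.2 + 8.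
Proof.
set st' := apply_gate st g; set S' := out st g |: S.
have others : \sum_(j | j != g.2) pot st' S' j <= \sum_(j | j != g.2) pot st S j + 8.
  apply: leq_trans (leq_sum _ (fun j => @pot_apply_gate_other st S g j)) _.
  rewrite big_split /= leq_add2l -big_distrr /= -[8]/(4 * 2) leq_mul2l /=.
  apply: leq_trans (card_nbrs g.2).
  rewrite -sum1_card [X in _ <= X]big_mkcond [X in _ <= X](bigD1 g.2) //=.
  apply: leq_trans _ (leq_addl _ _); apply: eq_leq.
  by apply: eq_bigr => j _; case: (j \in nbrs g.2).
rewrite !(total_potD1 _ _ g.2).
lia.
Qed.

Lemma reach_apply_gate st g : adj g.1 g.2 -> offL st g.1 = st g.1 ->
  offL (apply_gate st g) =1 offL st ->
  reach (apply_gate st g) g.2 \subset reach st g.2.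
Proof.
move=> adj_g offLc Eoff; have c_nbrs : g.1 \in nbrs g.2 by rewrite inE adjC.
apply/subsetP => y /imsetP [A]; rewrite inE => sAnbrs ->.
apply/imsetP; exists (symdiff [set g.1] A).
  rewrite inE subUset (subset_trans (subsetDl _ _) sAnbrs) andbT.
  by rewrite (subset_trans (subsetDl _ _)) ?sub1set.
under eq_bigr => k _ do rewrite Eoff.
rewrite big_symdiff big_set1 offLc apply_gateE eqxx /out.
by rewrite symdiffA (symdiffC (st g.1)).
Qed.

Lemma out_in_reach st g : adj g.1 g.2 -> offL st g.1 = st g.1 ->
  out st g \in reach st g.2.
Proof.
move=> adj_g offLc; apply/imsetP; exists [set g.1]; first by rewrite inE sub1set inE adjC.
by rewrite big_set1 offLc symdiffC.
Qed.

Lemma total_pot_apply_gate_fresh st S g : adj g.1 g.2 ->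
  st g.2 \in L -> out st g \in L -> out st g \notin S ->
  total_pot (apply_gate st g) (out st g |: S) < total_pot st S.
Proof.
set st' := apply_gate st g; set S' := out st g |: S.
move=> adj_g tL oL oNS.
have offLc : offL st g.1 = st g.1.
  by rewrite /offL ifN //; apply: contraL oL => cL; exact: Lfree.
have Eoff : offL st' =1 offL st.
  by move=> k; rewrite /offL apply_gateE; case: eqP => [-> | //]; rewrite oL tL.
have pot_t : pot st' S' g.2 < pot st S g.2.
  rewrite /pot apply_gateE eqxx oL tL; apply/proper_card/properP; split.
    exact: subset_trans (setSD _ (reach_apply_gate adj_g offLc Eoff))
                        (setDS _ (subsetUr _ _)).
  by exists (out st g); rewrite !inE ?eqxx // out_in_reach // oNS.
have others : \sum_(j | j != g.2) pot st' S' j <= \sum_(j | j != g.2) pot st S j.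
  apply: leq_sum => j jt; rewrite (pot_local _ _ (fun k _ => Eoff k)).
    exact/pot_subset/subsetUr.
  by rewrite apply_gateE (negbTE jt).
rewrite !(total_potD1 _ _ g.2).
lia.
Qed.

Definition step p g : labseq n * {set label n} :=
  (apply_gate p.1 g, out p.1 g |: p.2).

Definition weight p : nat :=
  total_pot p.1 p.2 + 22 * #|L :&: p.2|.

Lemma card_setI_setU1 (o : label n) S :
  #|L :&: (o |: S)| = ((o \in L) && (o \notin S)) + #|L :&: S|.
Proof.
have [oL | oNL] := boolP (o \in L); last first.
  rewrite /= add0n; apply: eq_card => x.
  by rewrite !inE; case: eqP => // ->; rewrite (negbTE oNL).
have -> : L :&: (o |: S) = o |: (L :&: S).
  by apply/setP => x; rewrite !inE; case: eqP => // ->; rewrite oL.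
by rewrite cardsU1 inE oL.
Qed.

Lemma weight_step p g : adj g.1 g.2 -> weight (step p g) <= weight p + 21.
Proof.
case: p => st S adj_g; rewrite /weight /= card_setI_setU1.
have := total_pot_apply_gate st S g.
have := pot_le13 (apply_gate st g) (out st g |: S) g.2.
have [oL | _] := boolP (out st g \in L); have [oS | oNS] := boolP (out st g \in S) => /=;
  try lia.
have [tL | tNL] := boolP (st g.2 \in L).
  have := total_pot_apply_gate_fresh adj_g tL oL oNS; lia.
have : pot st S g.2 = 13 by rewrite /pot (negbTE tNL).
have : pot (apply_gate st g) (out st g |: S) g.2 <= 4.
  by apply: pot_inL; rewrite apply_gateE eqxx.
lia.
Qed.

Lemma weight_run p s : all (fun g => adj g.1 g.2) s ->
  weight (foldl step p s) <= weight p + 21 * size s.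
Proof.
elim: s p => [|g s IHs] p /=; first by rewrite addn0.
move=> /andP [adj_g adj_s]; apply: leq_trans (IHs _ adj_s) _.
have := weight_step p adj_g; lia.
Qed.

Lemma run_labseq p s : (foldl step p s).1 = foldl (@apply_gate n) p.1 s.
Proof. by elim: s p => [|g s IHs] p //=; rewrite IHs. Qed.

Lemma run_seen_sub p s : p.2 \subset (foldl step p s).2.
Proof. by elim: s p => [|g s IHs] p //=; apply: subset_trans (IHs _); exact: subsetUr. Qed.

Lemma run_entries_seen p s : (forall k, p.1 k \in p.2) ->
  forall k, (foldl step p s).1 k \in (foldl step p s).2.
Proof.
elim: s p => [|g s IHs] p //= p_seen; apply: IHs => k /=.
by rewrite apply_gateE; case: eqP => _; rewrite !inE ?eqxx ?p_seen ?orbT.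
Qed.

Definition init_state : labseq n * {set label n} :=
  (init_labseq n, [set init_labseq n k | k in 'I_n]).

Lemma weight_init : weight init_state <= 35 * n.
Proof.
rewrite /weight /= -[35]/(13 + 22) mulnDl leq_add //.
  apply: leq_trans (leq_sum _ (fun j _ => pot_le13 _ _ j)) _.
  by rewrite sum_nat_const card_ord mulnC.
rewrite leq_mul2l /= (leq_trans (subset_leq_card (subsetIr _ _))) //.
by rewrite (leq_trans (leq_imset_card _ _)) ?card_ord.
Qed.

Lemma card_reached_le s :
  all (fun g => adj g.1 g.2) s ->
  (forall x, x \in L -> exists2 s1, prefix s1 s &
     exists k, foldl (@apply_gate n) (init_labseq n) s1 k = x) ->
  22 * #|L| <= 21 * size s + 35 * n.
Proof.
move=> adj_s reachL.
have L_seen : L \subset (foldl step init_state s).2.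
  apply/subsetP => x /reachL [s1 /prefixP [s2 ->] [k <-]].
  rewrite foldl_cat; apply: (subsetP (run_seen_sub _ _)).
  by rewrite -(run_labseq init_state); apply: run_entries_seen => k'; exact: imset_f.
have := weight_run init_state adj_s; rewrite {1}/weight (setIidPl L_seen).
have := weight_init; lia.
Qed.

End Potential.

Definition nn_adj n : rel 'I_n := fun j k => nn_gate (j, k).

Lemma nn_adjC n : symmetric (@nn_adj n).
Proof. by move=> j k; rewrite /nn_adj /nn_gate orbC. Qed.

Lemma card_nn_nbrs n (j : 'I_n) : #|nbrs (@nn_adj n) j| <= 2.
Proof.
have card_val_le1 (m : nat) : #|[set k : 'I_n | val k == m]| <= 1.
  by apply/card_le1_eqP => k k'; rewrite !inE => /eqP <- /eqP /val_inj.
have sub2 : nbrs (@nn_adj n) j \subset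
            [set k : 'I_n | val k == j.+1] :|: [set k : 'I_n | val k == j.-1].
  by apply/subsetP => k; rewrite !inE => /orP [/eqP -> | /eqP <-]; rewrite eqxx ?orbT.
apply: leq_trans (subset_leq_card sub2) (leq_trans (leq_card_setU _ _) _).
exact: (leq_add (card_val_le1 _) (card_val_le1 _)).
Qed.

Lemma nn_circuit_adj n (C : circuit n) :
  nn_circuit C -> all (fun g => nn_adj g.1 g.2) (flatten C).
Proof.
move=> /allP nnC; apply/allP => g /flattenP [M MC gM].
by have /andP [_ /allP nnM] := nnC M MC; exact: nnM g gM.
Qed.

Lemma apply_circuit_flatten n (l : labseq n) (C : circuit n) :
  apply_circuit l C = foldl (@apply_gate n) l (flatten C).
Proof. by elim: C l => [|M C IHC] l //=; rewrite foldl_cat -IHC. Qed.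

Lemma generates_reached n (C : circuit n) (L : {set label n}) :
  generates C L -> forall x, x \in L -> exists2 s1, prefix s1 (flatten C) &
    exists k, foldl (@apply_gate n) (init_labseq n) s1 k = x.
Proof.
move=> genC x /genC [m [_ [_ [k <-]]]].
exists (flatten (take m C)); last by exists k; rewrite apply_circuit_flatten.
by rewrite -{2}(cat_take_drop m C) flatten_cat prefix_prefix.
Qed.

Lemma nn_circuit_size_ge n (L : {set label n}) (C : circuit n) :
  symdiff_free L -> nn_circuit C -> generates C L ->
  22 * #|L| <= 21 * csize C + 35 * n.
Proof.
move=> Lfree nnC genC; rewrite /csize -size_flatten.
exact: (card_reached_le (@nn_adjC n) (@card_nn_nbrs n) Lfree (s := flatten C)
  (nn_circuit_adj nnC) (generates_reached genC)).
Qed.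

Lemma limn_einf_ge (R : realType) (u : (\bar R)^nat) (a : \bar R) (N : nat) :
  (forall m, (N <= m)%N -> (a <= u m)%E) -> (a <= limn_einf u)%E.
Proof.
move=> a_le; rewrite limn_einf_lim; apply: (lime_ge (@is_cvg_einfs _ u)).
exists N => // m /= Nm; apply: le_ereal_inf_tmp => _ [k /= mk <-].
exact/a_le/(leq_trans Nm mk).
Qed.

Theorem mainTheorem2 :
  exists gamma : Rdefinitions.R, (0 < gamma)%R /\
    forall (L : forall n : nat, {set label n}) (C : forall n : nat, circuit n),
      (forall n : nat, symdiff_free (L n)) ->
      superlinear L ->
      (forall n : nat, nn_circuit (C n)) ->
      (forall n : nat, generates (C n) (L n)) ->
      ((1 + gamma)%R%:E <= mu C L)%E.
Proof.
exists (1 / 44)%R; split; first by rewrite divr_gt0 // ltr0n.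
move=> L C Lfree Lsuper nnC genC.
have [N LN] := Lsuper 67.
apply: (@limn_einf_ge _ _ _ (maxn N 1)) => m; rewrite geq_max => /andP [Nm m_gt0].
have size_ge := nn_circuit_size_ge (Lfree m) (nnC m) (genC m).
have L_large := LN m Nm; have L_gt0 : (0 < #|L m|)%N by lia.
have : (45 * #|L m| <= 44 * csize (C m))%N by lia.
rewrite -(ler_nat Rdefinitions.R) !natrM lee_fin ler_pdivlMr ?ltr0n //.
move: (#|L m|%:R : Rdefinitions.R)%R ((csize (C m))%:R : Rdefinitions.R)%R => x y.
lra.
Qed.
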